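(* Let $k\ge 3$ and let $T$ be a tree with $|V(T)|=n$ that admits a $(3,k-2)$-completion set, and let $\mathrm{OPT}$ be the size of a minimum $(3,k-2)$-completion set of $T$. Then $(n-1)\cdot\frac{k-2}{2}\le \mathrm{OPT}$.
   Context: A connected graph $H$ has a $(3,\ell)$-cover if every edge of $H$ is contained in at least $\ell$ triangles. For a connected graph $G=(V,E)$, a set $E'\subseteq (V\times V)\setminus E$ of non-edges is a $(3,\ell)$-completion set of $G$ if $G\cup E'$ has a $(3,\ell)$-cover. *)

(* A simple graph on a finite vertex type V is given by its
   edge set E : {set {set V}}, every edge being a 2-element subset of V. *)
From mathcomp Require Import all_boot all_order all_algebra.
Set Implicit Arguments. Unset Strict Implicit. Unset Printing Implicit Defensive.

Section Graphs.
Variable V : finType.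

Definition simple_graph (E : {set {set V}}) : bool :=
  [forall e in E, #|e| == 2].

Definition adj (E : {set {set V}}) : rel V := fun x y => [set x; y] \in E.

Definition connected_graph (E : {set {set V}}) : bool :=
  (0 < #|V|) && [forall x, forall y, connect (adj E) x y].

Definition has_cycle (E : {set {set V}}) : Prop :=
  exists p : seq V, [/\ 3 <= size p, uniq p & cycle (adj E) p].

Definition is_tree (E : {set {set V}}) : Prop :=
  [/\ simple_graph E, connected_graph E & ~ has_cycle E].

Definition ntri (H : {set {set V}}) (u v : V) : nat :=
  #|[set w | ([set u; w] \in H) && ([set v; w] \in H)]|.

Definition has_cover3 (l : nat) (H : {set {set V}}) : Prop :=
  connected_graph H /\
  forall u v : V, [set u; v] \in H -> u != v -> l <= ntri H u v.

Definition completion_set (l : nat) (G E' : {set {set V}}) : Prop :=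
  [/\ simple_graph E', [disjoint E' & G] & has_cover3 l (G :|: E')].

Definition min_completion_set (l : nat) (G E' : {set {set V}}) : Prop :=
  completion_set l G E' /\
  forall F : {set {set V}}, completion_set l G F -> #|E'| <= #|F|.
End Graphs.

From mathcomp Require Import all_boot all_order all_algebra zify.
Import GRing.Theory Num.Theory.
Set Implicit Arguments. Unset Strict Implicit. Unset Printing Implicit Defensive.

(* Let H := T ∪ OPT and N(w) the H-neighbourhood of w.  Every edge e of T lies in
   at least k-2 triangles of H, i.e. e ⊆ N(w) for at least k-2 vertices w.  For a
   fixed w, the T-edges inside N(w) and the T-edges at w form a forest on w ∪ N(w),
   hence number at most |N(w)| ≤ deg_T(w) + deg_OPT(w); so at most deg_OPT(w) edges
   of T lie inside N(w).  Double counting the pairs (e, w) gives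
   (k-2)|E(T)| ≤ Σ_w deg_OPT(w) = 2|OPT|, and |E(T)| ≥ n-1 as T is connected. *)

Lemma sum_card_rel (I J : finType) (A : {set I}) (R : I -> J -> bool) :
  \sum_(i in A) #|[set j | R i j]| = \sum_j #|[set i in A | R i j]|.
Proof.
under eq_bigr do rewrite -sum1dep_card.
rewrite (exchange_big_dep predT) //=; apply: eq_bigr => j _.
by rewrite -sum1dep_card.
Qed.

Section SimpleGraphs.
Variable V : finType.
Implicit Types (E F H T : {set {set V}}) (S : {set V}) (u v w x y : V).

Definition edges_within E S := [set e in E | e \subset S].
Definition edges_at E w := [set e in E | w \in e].

Lemma card_edge E e : simple_graph E -> e \in E -> #|e| = 2.
Proof. by move=> /forall_inP sE /sE /eqP. Qed.

Lemma adjC E x y : adj E x y = adj E y x.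
Proof. by rewrite /adj setUC. Qed.

Lemma adj_irrefl E x : simple_graph E -> ~~ adj E x x.
Proof. by move=> sE; apply/negP => /(card_edge sE); rewrite setUid cards1. Qed.

Lemma set2_inj x : injective (fun y : V => [set x; y]).
Proof.
move=> y y' eq_xy; have: y \in [set x; y'] by rewrite -eq_xy set22.
case/set2P=> [yx|//]; have: y' \in [set x; y] by rewrite eq_xy set22.
by rewrite yx setUid => /set1P.
Qed.

Lemma maximal_path E S x0 : simple_graph E -> x0 \in S ->
  exists x p, [/\ uniq (x :: p), all [in S] (x :: p), path (adj E) x p &
                  {in S, forall y, adj E x y -> y \in p}].
Proof.
move=> sE x0S.
pose P m := [exists x, exists p : m.-tuple V,
  [&& uniq (x :: p), all [in S] (x :: p) & path (adj E) x p]].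
have P0 : exists m, P m.
  by exists 0; apply/existsP; exists x0; apply/existsP; exists [tuple]; rewrite /= x0S.
have P_le m : P m -> m <= #|V|.
  case/existsP=> x /existsP [p /and3P [uniq_p _ _]].
  by have := max_card (mem (x :: p)); rewrite (card_uniqP uniq_p) /= size_tuple; apply: ltnW.
case: (ex_maxnP P0 P_le) => m /existsP [x /existsP [p /and3P [uniq_p S_p path_p]]] maxm.
exists x, p; split=> // y yS axy; apply/negPn/negP => y_p.
have yx : y != x by apply: contraTneq axy => ->; apply: adj_irrefl.
suff /maxm : P m.+1 by rewrite ltnn.
apply/existsP; exists y; apply/existsP; exists [tuple of x :: p].
by move: uniq_p S_p; rewrite /= inE negb_or yx y_p yS adjC axy path_p => -> ->.
Qed.

Lemma has_cycle_of_chord E x x1 s y :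
  uniq [:: x, x1 & s] -> path (adj E) x (x1 :: s) -> y \in s -> adj E x y ->
  has_cycle E.
Proof.
move=> uniq_p path_p y_s; case/splitPr: y_s uniq_p path_p => a b.
rewrite -cat_rcons -!cat_cons => uniq_p path_p axy.
exists (x :: x1 :: rcons a y); split; first by rewrite /= size_rcons.
  by move: uniq_p; rewrite cat_uniq => /andP [].
rewrite /cycle rcons_path last_cons last_rcons adjC axy andbT.
by move: path_p; rewrite cat_path => /andP [].
Qed.

Lemma has_cycle_of_min_degree2 E S : simple_graph E -> S != set0 ->
  {in S, forall x, 1 < #|[set y in S | adj E x y]|} -> has_cycle E.
Proof.
move=> sE /set0Pn [x0 x0S] deg2.
have [x [p [uniq_p S_p path_p nbhd_p]]] := maximal_path sE x0S.
have {S_p} xS : x \in S by case/andP: S_p.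
have /card_gt0P [y] : 0 < #|[set y in S | adj E x y] :\ head x p|.
  have := deg2 x xS; rewrite (cardsD1 (head x p)).
  by have := leq_b1 (head x p \in [set y in S | adj E x y]); lia.
rewrite !inE => /and3P [y_head yS axy].
case: p uniq_p path_p nbhd_p y_head => [|x1 s] uniq_p path_p nbhd_p y_head.
  by have := nbhd_p y yS axy.
apply: (has_cycle_of_chord uniq_p path_p _ axy).
by move: (nbhd_p y yS axy); rewrite inE (negbTE y_head).
Qed.

Lemma card_edges_withinD1 E S x : simple_graph E ->
  #|edges_within E S| <= #|edges_within E (S :\ x)| + #|[set y in S | adj E x y]|.
Proof.
move=> sE; rewrite -(card_imset _ (@set2_inj x)).
apply: leq_trans (leq_of_leqif (leq_card_setU _ _)); apply/subset_leq_card/subsetP => e.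
rewrite !inE => /andP [eE eS]; have [xe|xe] := boolP (x \in e); last first.
  rewrite eE /=; apply/orP; left; apply/subsetP => z ze.
  by rewrite !inE (subsetP eS _ ze) andbT; apply: contraNneq xe => <-.
apply/orP; right; have /cards2P [a [b [_ eab]]] : #|e| == 2 by rewrite (card_edge sE eE).
move: xe eS eE; rewrite eab => /set2P [] -> eS eE; apply/imsetP.
  by exists b; rewrite // inE (subsetP eS _ (set22 _ _)).
by exists a; rewrite 1?setUC // inE (subsetP eS _ (set21 _ _)) adjC.
Qed.

Lemma edges_within_card_le1 E S : simple_graph E -> #|S| <= 1 ->
  edges_within E S = set0.
Proof.
move=> sE S_le1; apply/setP => e; rewrite !inE; apply/negbTE/andP.
by case=> /(card_edge sE) card_e /subset_leq_card; rewrite card_e => /leq_trans/(_ S_le1).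
Qed.

Lemma forest_card_edges_within E S : simple_graph E -> ~ has_cycle E ->
  0 < #|S| -> #|edges_within E S| < #|S|.
Proof.
move=> sE acyclic; have [n] := ubnP #|S|; elim: n S => // n IH S.
rewrite ltnS => le_S_n S_gt0; have [S_le1|S_gt1] := leqP #|S| 1.
  by rewrite edges_within_card_le1 ?cards0.
have [x xS deg_x] : exists2 x, x \in S & #|[set y in S | adj E x y]| <= 1.
  apply/exists_inP; apply: contra_notT acyclic => /exists_inPn deg2.
  apply: (@has_cycle_of_min_degree2 E S sE); first by rewrite -card_gt0.
  by move=> y /deg2; rewrite -ltnNge.
have cardSx : #|S :\ x| = #|S|.-1 by rewrite (cardsD1 x S) xS.
have IHx : #|edges_within E (S :\ x)| < #|S :\ x| by apply: IH; lia.
have := card_edges_withinD1 S x sE; lia.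
Qed.

Lemma connect_descent E r : (forall x, connect (adj E) x r) ->
  exists d : V -> nat, forall x, x != r -> exists2 y, adj E x y & d y < d x.
Proof.
move=> conn_r.
pose P x m := [exists p : m.-tuple V, path (adj E) x p && (last x p == r)].
have exP x : exists m, P x m.
  case/connectP: (conn_r x) => p path_p last_p; exists (size p).
  by apply/existsP; exists (in_tuple p); rewrite /= path_p -last_p eqxx.
exists (fun x => ex_minn (exP x)) => x xr.
case: ex_minnP => m /existsP [[[|y s] /= /eqP <-]]; first by rewrite (negbTE xr).
case/andP=> /andP [axy path_s] last_s _; exists y => //.
case: ex_minnP => m' _; apply.
by apply/existsP; exists (in_tuple s); rewrite /= path_s.
Qed.

Lemma card_edges_of_descent E r (d : V -> nat) :
  (forall x, x != r -> exists2 y, adj E x y & d y < d x) -> #|V|.-1 <= #|E|.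
Proof.
move=> descent; pose par x := odflt x [pick y | adj E x y && (d y < d x)].
have parP x : x != r -> adj E x (par x) && (d (par x) < d x).
  move=> xr; rewrite /par; case: pickP => [y //|none].
  by case: (descent x xr) => y axy dy; move: (none y); rewrite axy dy.
have par_inj : {in [set~ r] &, injective (fun x => [set x; par x])}.
  move=> x x'; rewrite !inE => /parP/andP [_ dx] /parP/andP [_ dx'] eq_x.
  have: x \in [set x'; par x'] by rewrite -eq_x set21.
  case/set2P=> [//|x_par]; have: x' \in [set x; par x] by rewrite eq_x set21.
  by case/set2P=> [->//|x'_par]; move: dx dx'; rewrite -x_par -x'_par; lia.
rewrite -(cardsC1 r) -(card_in_imset par_inj); apply/subset_leq_card/subsetP.
by move=> e /imsetP [x]; rewrite !inE => /parP/andP [axp _] ->.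
Qed.

Lemma connected_card_edges E : connected_graph E -> #|V|.-1 <= #|E|.
Proof.
case/andP=> /card_gt0P [r _] /forallP conn.
have [d descent] := connect_descent (fun x => forallP (conn x) r).
exact: card_edges_of_descent descent.
Qed.

Lemma simple_graphU E F : simple_graph E -> simple_graph F -> simple_graph (E :|: F).
Proof.
by move=> sE sF; apply/forall_inP => e; case/setUP=> [/(card_edge sE)|/(card_edge sF)] ->.
Qed.

Lemma card_nbhd_le_edges_at E w : #|[set y | adj E w y]| <= #|edges_at E w|.
Proof.
rewrite -(card_imset _ (@set2_inj w)); apply/subset_leq_card/subsetP => e.
by case/imsetP=> y; rewrite inE => axy ->; rewrite inE set21 andbT.
Qed.

Lemma card_nbhdU E F w :
  #|[set y | adj (E :|: F) w y]| <= #|edges_at E w| + #|edges_at F w|.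
Proof.
apply: leq_trans (card_nbhd_le_edges_at _ _) _.
apply: leq_trans (leq_of_leqif (leq_card_setU _ _)); apply/subset_leq_card/subsetP => e.
by rewrite !inE => /andP [/orP [] -> ->]; rewrite ?orbT.
Qed.

Lemma card_edges_within_setU1 E S w : simple_graph E -> w \notin S ->
  {subset [set y | adj E w y] <= S} ->
  #|edges_within E S| + #|edges_at E w| <= #|edges_within E (w |: S)|.
Proof.
move=> sE wS nbhd_S; rewrite -cardsUI.
have -> : edges_within E S :&: edges_at E w = set0.
  apply/setP => e; rewrite !inE; apply/negbTE/andP => -[/andP [_ eS] /andP [_ we]].
  by move: wS; rewrite (subsetP eS _ we).
rewrite cards0 addn0; apply/subset_leq_card/subsetP => e.
rewrite !inE => /orP [/andP [eE eS] | /andP [eE we]]; rewrite eE /=.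
  exact: subset_trans eS (subsetUr _ _).
have /cards2P [a [b [_ eab]]] : #|e| == 2 by rewrite (card_edge sE eE).
move: we eE; rewrite eab => /set2P [] <- eE; apply/subsetP => z /set2P [] ->.
- exact: setU11.
- by rewrite setU1r // nbhd_S // inE.
- by rewrite setU1r // nbhd_S // inE adjC.
- exact: setU11.
Qed.

Lemma forest_edges_within_nbhd T F w :
  simple_graph T -> ~ has_cycle T -> simple_graph F ->
  #|edges_within T [set y | adj (T :|: F) w y]| <= #|edges_at F w|.
Proof.
move=> sT acyclic sF; set N := [set y | adj (T :|: F) w y].
have wN : w \notin N by rewrite inE adj_irrefl ?simple_graphU.
have N_T : {subset [set y | adj T w y] <= N}.
  by move=> y; rewrite !inE => axy; apply/setUP; left.
have := forest_card_edges_within (S := w |: N) sT acyclic.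
rewrite cardsU1 wN add1n ltnS => /(_ isT) forest.
have := card_nbhdU T F w; rewrite -/N => nbhd.
have := card_edges_within_setU1 sT wN N_T; lia.
Qed.

Lemma sum_card_edges_at E : simple_graph E -> \sum_w #|edges_at E w| = 2 * #|E|.
Proof.
move=> sE; rewrite -(sum_card_rel E (fun (e : {set V}) w => w \in e)) mulnC -sum_nat_const.
by apply: eq_bigr => e eE; rewrite -(card_edge sE eE); apply: eq_card => w; rewrite inE.
Qed.

Lemma ntriE H u v :
  ntri H u v = #|[set w | [set u; v] \subset [set y | adj H w y]]|.
Proof.
apply: eq_card => w; rewrite !inE subUset !sub1set !inE.
by rewrite (adjC _ w u) (adjC _ w v).
Qed.

Lemma forest_cover_bound l T F :
  simple_graph T -> ~ has_cycle T -> simple_graph F ->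
  (forall u v, [set u; v] \in T -> u != v -> l <= ntri (T :|: F) u v) ->
  #|T| * l <= 2 * #|F|.
Proof.
move=> sT acyclic sF cover; set N := fun w => [set y | adj (T :|: F) w y].
have tri_e e : e \in T -> l <= #|[set w | e \subset N w]|.
  move=> eT; have /cards2P [u [v [uv euv]]] : #|e| == 2 by rewrite (card_edge sT eT).
  by rewrite euv -ntriE; apply: cover; rewrite -?euv.
rewrite -sum_nat_const -sum_card_edges_at //.
apply: leq_trans (leq_sum _ tri_e) _; rewrite sum_card_rel.
by apply: leq_sum => w _; apply: forest_edges_within_nbhd.
Qed.
End SimpleGraphs.

Local Open Scope ring_scope.

Theorem corollary1 (V : finType) (k : nat) (T : {set {set V}}) :
  (3 <= k)%N -> is_tree T ->
  (exists E' : {set {set V}}, completion_set (k - 2) T E') ->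
  forall OPTset : {set {set V}}, min_completion_set (k - 2) T OPTset ->
  ((#|V|%:R - 1) * ((k%:R - 2) / 2) <= (#|OPTset|%:R : rat)).
Proof.
move=> k3 [sT cT acyclic] _ OPT [[sOPT _ [_ cover]] _].
have bound : (#|V|.-1 * (k - 2) <= 2 * #|OPT|)%N.
  apply: leq_trans (leq_mul (connected_card_edges cT) (leqnn _)) _.
  apply: forest_cover_bound sT acyclic sOPT _ => u v uvT; apply: cover.
  by rewrite inE uvT.
have /prednK <- : (0 < #|V|)%N by case/andP: cT.
rewrite -natr1 addrK -(natrB _ (leq_trans _ k3)) //.
by rewrite mulrA ler_pdivrMr // -!natrM ler_nat (mulnC _ 2).
Qed.
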